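(* Let $n\ge 1$ and let $f:\{0,1\}^n\to\{0,1\}^n$ be such that: (1) $G(f)$ has no circuit of length at least two; (2) every vertex of $G(f)$ with a positive loop also has a negative loop; (3) every vertex of $G(f)$ is reachable in $G(f)$ from a vertex with a negative loop. Then the asynchronous iteration graph $\Gamma(f)$ is strongly connected.
   Context: For $x\in\{0,1\}^n$ and $j\in\{1,\dots,n\}$, $\overline{x}^j$ denotes $x$ with its $j$-th component switched. The discrete Jacobian entries of $f=(f_1,\dots,f_n)$ are $f_{ij}(x)=\frac{f_i(\overline{x}^j)-f_i(x)}{\overline{x}^j_j-x_j}\in\{-1,0,1\}$. The interaction graph $G(f)$ is the signed directed graph on vertex set $\{1,\dots,n\}$ with an arc $(j,s,i)$ from $j$ to $i$ of sign $s\in\{-1,1\}$ whenever $f_{ij}(x)=s$ for some $x\in\{0,1\}^n$ (arcs of both signs between the same pair are allowed). A path is a sequence of arcs $(i_1,s_1,i_2),(i_2,s_2,i_3),\dots,(i_r,s_r,i_{r+1})$, of length $r$; $i_{r+1}$ is then reachable from $i_1$. It is a circuit if $i_{r+1}=i_1$ and $i_1,\dots,i_r$ are pairwise distinct. A vertex has a positive (resp. negative) loop if there is a positive (resp. negative) arc from it to itself. With $F_f(i,x)=(x_1,\dots,x_{i-1},f_i(x),x_{i+1},\dots,x_n)$, the asynchronous iteration graph $\Gamma(f)$ has vertex set $\{0,1\}^n$ and an arc from $x$ to $F_f(i,x)$ for every $x$ and every $i\in\{1,\dots,n\}$. *)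

From mathcomp Require Import all_boot all_order all_algebra.
Set Implicit Arguments. Unset Strict Implicit. Unset Printing Implicit Defensive.
Import Order.TTheory GRing.Theory Num.Theory.
Local Open Scope ring_scope.

Definition config (n : nat) := {ffun 'I_n -> bool}.
Definition bnet (n : nat) := config n -> config n.

Definition flip n (x : config n) (j : 'I_n) : config n :=
  [ffun k => if k == j then ~~ x k else x k].

Definition b2z (b : bool) : int := (b : nat)%:Z.

(* discrete Jacobian entry f_ij(x) = (f_i(flip x j) - f_i(x)) / ((flip x j)_j - x_j)
   (the denominator is +-1, so division = multiplication) *)
Definition jac n (f : bnet n) (i j : 'I_n) (x : config n) : int :=
  (b2z (f (flip x j) i) - b2z (f x i)) * (b2z (flip x j j) - b2z (x j)).

Definition arc n (f : bnet n) (j : 'I_n) (s : int) (i : 'I_n) : Prop :=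
  (s = 1 \/ s = -1) /\ exists x : config n, jac f i j x = s.

Definition arcb n (f : bnet n) : rel 'I_n :=
  fun j i => [exists x : config n, jac f i j x != 0].

Definition has_circuit_of_length n (f : bnet n) (r : nat) : Prop :=
  exists c : nat -> 'I_n,
    (forall k l : nat, (k < r)%N -> (l < r)%N -> c k = c l -> k = l) /\
    (forall k : nat, (k < r)%N -> exists s, arc f (c k) s (c (k.+1 %% r)%N)).

Definition positive_loop n (f : bnet n) (i : 'I_n) := arc f i 1 i.
Definition negative_loop n (f : bnet n) (i : 'I_n) := arc f i (-1) i.

Definition reachable n (f : bnet n) (j i : 'I_n) : Prop := connect (arcb f) j i.

Definition Fupd n (f : bnet n) (i : 'I_n) (x : config n) : config n :=
  [ffun k => if k == i then f x i else x k].

Definition async_edge n (f : bnet n) : rel (config n) :=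
  fun x y => [exists i : 'I_n, y == Fupd f i x].

Definition strongly_connected (T : finType) (e : rel T) : Prop :=
  forall x y : T, connect e x y.

(* Induction on a set S of components, closed under predecessors in G(f),
   outside which the source x and the target y agree.  As G(f) has no circuit
   of length >= 2, S contains a vertex v with no arc to the rest of S, so S
   minus v is again closed.  Every vertex v is switchable: some assignment of
   its regulators other than v itself forces f_v to negate the current value of
   v.  This comes from a negative loop at v or, when v has none (and hence no
   loop at all), from the last arc of a path reaching v from a vertex with a
   negative loop.  To correct x_v, move the components of S minus v to such an
   assignment, update v, and use the induction hypothesis before and after. *)

From Pilot Require Import Defs.
From mathcomp Require Import all_boot all_order all_algebra.
From mathcomp Require Import zify.
Set Implicit Arguments. Unset Strict Implicit. Unset Printing Implicit Defensive.

Section InteractionGraph.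

Variables (n : nat) (f : bnet n).

Lemma flip_at (x : config n) j : flip x j j = ~~ x j.
Proof. by rewrite ffunE eqxx. Qed.

Lemma flip_neq (x : config n) j k : k != j -> flip x j k = x k.
Proof. by rewrite ffunE => /negbTE ->. Qed.

Lemma jac_values i j x : jac f i j x \in [:: 0; 1; -1]%R.
Proof.
by rewrite /jac /b2z flip_at; case: (f (flip x j) i); case: (f x i); case: (x j).
Qed.

Lemma jac_eq0 i j x : (jac f i j x == 0%R) = (f (flip x j) i == f x i).
Proof.
by rewrite /jac /b2z flip_at; case: (f (flip x j) i); case: (f x i); case: (x j).
Qed.

(* Plain [arc] would resolve to the sequence function [path.arc]. *)
Lemma arcb_arc u w : arcb f u w -> exists s, Defs.arc f u s w.
Proof.
move=> /existsP [x jac_nz]; exists (jac f w u x); split; last by exists x.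
by move: (jac_values w u x) jac_nz; rewrite !inE => /or3P [/eqP->|/eqP->|/eqP->];
  rewrite ?eqxx //; [left | right].
Qed.

Lemma flip_noarc u v (w : config n) : ~~ arcb f u v -> f (flip w u) v = f w v.
Proof. by move=> /existsPn /(_ w) /negPn; rewrite jac_eq0 => /eqP. Qed.

Lemma eq_bnet_regulators v (w w' : config n) :
  (forall u, arcb f u v -> w u = w' u) -> f w v = f w' v.
Proof.
have [m] := ubnP #|[set u | w u != w' u]|; elim: m w => // m IH w.
rewrite ltnS => card_diff agree.
have [eq_ww' | [u]] := set_0Vmem [set u | w u != w' u].
  suff -> : w = w' by [].
  by apply/ffunP => u; apply/eqP; apply: contraFT (in_set0 u); rewrite -eq_ww' inE.
rewrite inE => neq_u.
have noarc_u : ~~ arcb f u v by apply: contra neq_u => /agree ->.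
rewrite -(flip_noarc w noarc_u); apply: IH => [|k /agree]; last first.
  by rewrite ffunE; case: (eqVneq k u) => [->|//] eq_u; rewrite eq_u eqxx in neq_u.
apply: leq_trans card_diff; rewrite [X in (_ < X)%N](cardsD1 u) inE neq_u ltnS.
apply/subset_leq_card/subsetP => k; rewrite !inE ffunE.
by case: (eqVneq k u) => [->|//]; case: (w u) neq_u; case: (w' u).
Qed.

Lemma circuit_of_orbit (g : 'I_n -> 'I_n) (P : pred 'I_n) v0 :
  (forall v, P v -> [/\ P (g v), g v != v & arcb f v (g v)]) -> P v0 ->
  exists2 r, (2 <= r)%N & has_circuit_of_length f r.
Proof.
move=> g_step P_v0.
have P_iter k : P (iter k g v0) by elim: k => //= k /g_step [].
pose N := order g v0.
(* g^0 v0, ..., g^(N-1) v0 are distinct and g^N v0 = g^i v0 for some i < N,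
   so g^i v0, ..., g^(N-1) v0 is a circuit, of length >= 2 as g has no fixed
   point. *)
have /trajectP [i lt_iN iterN] := looping_order g v0.
have inj_iter k l : (k < N)%N -> (l < N)%N -> iter k g v0 = iter l g v0 -> k = l.
  move=> ltkN ltlN eq_kl; apply/eqP.
  rewrite -(nth_uniq v0 _ _ (orbit_uniq g v0)) ?size_orbit //.
  by rewrite /orbit !nth_traject // eq_kl.
have iter_last : iter (i + (N - i).-1).+1 g v0 = iter i g v0.
  by have -> : (i + (N - i).-1).+1 = N by lia.
exists (N - i).
  case: (ltngtP (N - i) 1) => [|//|eq1]; first lia.
  have N_eq : N = i.+1 by lia.
  by have [_ + _] := g_step _ (P_iter i); rewrite -iterS -N_eq iterN eqxx.
exists (fun k => iter (i + k) g v0); split => [k l ltk ltl /inj_iter | k ltk]; first lia.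
apply: arcb_arc; case: (ltngtP k.+1 (N - i)) => [ltk1 | | eqk1].
- by rewrite modn_small // addnS; case: (g_step _ (P_iter (i + k))).
- lia.
- rewrite eqk1 modnn addn0 -iter_last; have -> : k = (N - i).-1 by lia.
  by case: (g_step _ (P_iter (i + (N - i).-1))).
Qed.

Hypothesis no_circuit : forall r, (2 <= r)%N -> ~ has_circuit_of_length f r.

Lemma exists_local_sink (S : {set 'I_n}) v0 : v0 \in S ->
  exists2 v, v \in S & forall w, w \in S -> w != v -> ~~ arcb f v w.
Proof.
pose succ v := [pick w in S | (w != v) && arcb f v w].
have [v /andP [S_v /eqP succ_v] _ | no_sink S_v0] :=
  pickP [pred v | (v \in S) && (succ v == None)].
  exists v => // w S_w neq_wv; apply/negP => arc_vw.
  by move: succ_v; rewrite /succ; case: pickP => // /(_ w); rewrite S_w neq_wv arc_vw.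
exfalso; pose g v := odflt v (succ v).
suff [r] : exists2 r, (2 <= r)%N & has_circuit_of_length f r by apply: no_circuit.
apply: (circuit_of_orbit (P := [pred v | v \in S]) (g := g)) S_v0 => v /= S_v.
move: (no_sink v); rewrite /= S_v /g /succ.
by case: pickP => // w /and3P [].
Qed.

Definition switchable v := forall b, exists z : config n, forall w : config n,
  (forall u, arcb f u v -> u != v -> w u = z u) -> w v = b -> f w v = ~~ b.

Lemma negative_loop_switchable v : negative_loop f v -> switchable v.
Proof.
move=> [_ [x0 jac_x0]] b.
have [f_x0 f_flip] : f x0 v = ~~ x0 v /\ f (flip x0 v) v = x0 v.
  move: jac_x0; rewrite /jac /b2z flip_at.
  by case: (f (flip x0 v) v); case: (f x0 v); case: (x0 v).
exists x0 => w agree w_v.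
have -> : f w v = f (if x0 v == b then x0 else flip x0 v) v.
  apply: eq_bnet_regulators => u arc_uv; case: (eqVneq u v) => [->|neq_uv].
    rewrite {}w_v; case: eqVneq => //.
    by rewrite flip_at; case: (x0 v); case: b.
  by rewrite agree //; case: ifP => // _; rewrite flip_neq.
move=> {agree w_v}.
by case: eqVneq => [<- //|]; rewrite f_flip; case: (x0 v); case: b.
Qed.

Lemma in_arc_switchable u v :
  ~~ arcb f v v -> u != v -> arcb f u v -> switchable v.
Proof.
move=> noloop_v neq_uv /existsP [x1 jac_x1] b.
have f_flip : f (flip x1 u) v = ~~ f x1 v.
  by move: jac_x1; rewrite jac_eq0; case: (f (flip x1 u) v); case: (f x1 v).
exists (if f x1 v == ~~ b then x1 else flip x1 u) => w agree _.
have -> : f w v = f (if f x1 v == ~~ b then x1 else flip x1 u) v.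
  apply: eq_bnet_regulators => u' arc_u'v; apply: agree => //.
  by apply: contraTneq arc_u'v => ->.
move=> {agree}.
by case: eqVneq => [// | ]; rewrite f_flip; case: (f x1 v); case: b.
Qed.

Lemma loop_switchable v :
  (positive_loop f v -> negative_loop f v) ->
  (exists j, negative_loop f j /\ reachable f j v) -> switchable v.
Proof.
move=> pos_neg [j [neg_j /connectP [p path_p last_p]]].
have [neg_v | no_neg_v] := boolP [exists x, jac f v v x == (-1)%R].
  by apply: negative_loop_switchable; move: neg_v => /existsP [x /eqP]; split; [right | exists x].
have neq_neg_v j' : negative_loop f j' -> j' != v.
  move=> [_ [x jac_x]]; apply: contraNneq no_neg_v => <-.
  by apply/existsP; exists x; rewrite jac_x.
have noloop_v : ~~ arcb f v v.
  apply/negP => /arcb_arc [s [[] -> jac_v]].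
    by have /neq_neg_v := pos_neg (conj (or_introl erefl) jac_v); rewrite eqxx.
  by have /neq_neg_v : negative_loop f v := conj (or_intror erefl) jac_v; rewrite eqxx.
case/lastP: p path_p last_p => [_ /= eq_jv | p u].
  by move: (neq_neg_v j neg_j); rewrite eq_jv eqxx.
rewrite rcons_path last_rcons => /andP [_ arc_pu] eq_uv; subst u.
apply: (in_arc_switchable noloop_v _ arc_pu).
by apply: contraTneq arc_pu => ->.
Qed.

Definition ancestor_closed (S : {set 'I_n}) :=
  forall u v, arcb f u v -> v \in S -> u \in S.

Lemma ancestor_closedD1 S v : ancestor_closed S ->
  (forall w, w \in S -> w != v -> ~~ arcb f v w) -> ancestor_closed (S :\ v).
Proof.
move=> closed_S sink_v u w arc_uw; rewrite !inE => /andP [neq_wv S_w].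
rewrite (closed_S _ _ arc_uw S_w) andbT.
by apply: contraTneq arc_uw => ->; apply: sink_v.
Qed.

Lemma async_edge_Fupd i x : async_edge f x (Fupd f i x).
Proof. by apply/existsP; exists i. Qed.

Hypothesis all_switchable : forall v, switchable v.

Lemma connect_agree_outside S : ancestor_closed S ->
  forall x y : config n, (forall k, k \notin S -> x k = y k) ->
  connect (async_edge f) x y.
Proof.
have [m] := ubnP #|S|; elim: m S => // m IH S; rewrite ltnS => card_S closed_S x y agree.
have [S0 | [v0 S_v0]] := set_0Vmem S.
  suff -> : x = y by [].
  by apply/ffunP => k; apply: agree; rewrite S0 inE.
have [v S_v sink_v] := exists_local_sink S_v0.
have {IH} IH (x' y' : config n) : (forall k, k \notin S :\ v -> x' k = y' k) ->
    connect (async_edge f) x' y'.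
  apply: IH; last exact: ancestor_closedD1.
  by move: card_S; rewrite (cardsD1 v) S_v.
have notin_S' k : k \notin S :\ v -> k = v \/ k \notin S.
  by rewrite !inE negb_and negbK => /orP [/eqP|]; [left | right].
have [eq_v | neq_v] := eqVneq (x v) (y v).
  by apply: IH => k /notin_S' [-> | /agree].
have [z switch_z] := all_switchable v (x v).
pose w : config n := [ffun k => if k \in S :\ v then z k else x k].
apply: (connect_trans (IH x w _)) => [k notin_k | ].
  by rewrite ffunE (negbTE notin_k).
apply: (connect_trans (connect1 (async_edge_Fupd v w))); apply: IH => k notin_k.
rewrite ffunE; case: (eqVneq k v) => [-> | neq_kv].
  rewrite switch_z.
  - by move: neq_v; case: (x v); case: (y v).
  - move=> u arc_uv neq_uv; rewrite ffunE !inE neq_uv /=.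
    by rewrite (closed_S _ _ arc_uv S_v).
  - by rewrite ffunE !inE eqxx.
rewrite ffunE (negbTE notin_k); apply: agree.
by case: (notin_S' k notin_k) => // eq_kv; rewrite eq_kv eqxx in neq_kv.
Qed.

End InteractionGraph.

Theorem theorem2 (n : nat) (f : bnet n) :
  (0 < n)%N ->
  (forall r : nat, (2 <= r)%N -> ~ has_circuit_of_length f r) ->
  (forall i : 'I_n, positive_loop f i -> negative_loop f i) ->
  (forall i : 'I_n, exists j : 'I_n, negative_loop f j /\ reachable f j i) ->
  strongly_connected (async_edge f).
Proof.
move=> _ no_circuit pos_neg neg_reach x y.
have switchable_f v : switchable f v := loop_switchable (pos_neg v) (neg_reach v).
apply: (connect_agree_outside no_circuit switchable_f (S := [set: 'I_n])).
- by rewrite /ancestor_closed => u v _ _; rewrite in_setT.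
- by move=> k; rewrite in_setT /=.
Qed.
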